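(* Let $\omega\in S_n$ and $1\le i<j\le n$ with $c_i(\omega),c_j(\omega)>0$. If $m_{i,p}(\omega)>m_{j,q}(\omega)$ for some $p\in[c_i(\omega)]$ and $q\in[c_j(\omega)]$, then $\{k: j<k\le n,\ \omega(i)>\omega(k)\}\subseteq\{l: j<l\le n,\ \omega(j)>\omega(l)\}$.
   Context: Permutations $\omega\in S_n$ are written in one-line notation. Let ${\rm Inv}(\omega)=\{(i,j): 1\le i<j\le n,\ \omega(i)>\omega(j)\}$, $c_i(\omega)=\#\{j: i<j\le n,\ \omega(i)>\omega(j)\}$, and for $i<j$, $c_{i,j}(\omega)=\#\{k: i<k<j,\ \omega(i)>\omega(k)\}$; $[m]=\{1,\dots,m\}$. For $i$ with $c_i(\omega)>0$ and $x\in[c_i(\omega)]$, $m_{i,x}(\omega)\in\mathbb{N}^n$ has $j$-th coordinate $0$ if $j<i$; $x$ if $j=i$; $0$ if $j>i$ and $(i,j)\in{\rm Inv}(\omega)$; $\max\{0,x-c_{i,j}(\omega)\}$ if $j>i$ and $(i,j)\notin{\rm Inv}(\omega)$. Comparisons are strict comparisons in the product order on $\mathbb{N}^n$. *)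

(* Positions [n] = {1..n} are represented by 'I_n (0-based,
   order-preserving relabeling); permutations of S_n by 'S_n. *)
From mathcomp Require Import all_boot all_order all_fingroup.
Set Implicit Arguments. Unset Strict Implicit. Unset Printing Implicit Defensive.

Definition inv_pair (n : nat) (w : 'S_n) (i j : 'I_n) : bool :=
  (i < j) && (w j < w i).

Definition code (n : nat) (w : 'S_n) (i : 'I_n) : nat :=
  #|[set j : 'I_n | (i < j) && (w j < w i)]|.

Definition code2 (n : nat) (w : 'S_n) (i j : 'I_n) : nat :=
  #|[set k : 'I_n | [&& i < k, k < j & w k < w i]]|.

Definition mvec (n : nat) (w : 'S_n) (i : 'I_n) (x : nat) (j : 'I_n) : nat :=
  if j < i then 0
  else if j == i then x
  else if inv_pair w i j then 0
  else x - code2 w i j.   (* truncated subtraction = max{0, x - c_{i,j}} *)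

Definition prod_gt (n : nat) (a b : 'I_n -> nat) : Prop :=
  (forall k, b k <= a k) /\ (exists k, b k < a k).

From Pilot Require Import Defs.
From mathcomp Require Import all_boot all_order all_fingroup.

(* Look at the j-th coordinate of the two vectors.  On the one
   hand m_{j,q}(w) has j-th coordinate q >= 1 (the diagonal coordinate).  On
   the other hand, since i < j, the j-th coordinate of m_{i,p}(w) vanishes as
   soon as (i,j) is an inversion.  Domination m_{i,p} > m_{j,q} therefore
   forbids (i,j) from being an inversion, and as w is injective this means
   w(i) < w(j).  Any k > j with w(k) < w(i) then also satisfies w(k) < w(j),
   which is the claimed inclusion. *)

(* The inversion predicate is written Defs.inv_pair because the library
   constant monoid.inv_pair, imported after Defs, shadows the short name. *)

Section MVecCoordinates.

Variables (n : nat) (w : 'S_n).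

Lemma mvec_diag (i : 'I_n) (x : nat) : mvec w i x i = x.
Proof. by rewrite /mvec ltnn eqxx. Qed.

Lemma mvec_inv_pair (i j : 'I_n) (x : nat) :
  Defs.inv_pair w i j -> mvec w i x j = 0.
Proof.
move=> ij_inv; have /andP[lt_ij _] := ij_inv.
have ne_ji : (j == i) = false by apply/negbTE; rewrite neq_ltn lt_ij orbT.
by rewrite /mvec ltnNge (ltnW lt_ij) ne_ji ij_inv.
Qed.

End MVecCoordinates.

Lemma perm_ascent (n : nat) (w : 'S_n) (i j : 'I_n) :
  i < j -> ~~ Defs.inv_pair w i j -> w i < w j.
Proof.
move=> lt_ij; rewrite /Defs.inv_pair lt_ij /= -leqNgt leq_eqVlt => /orP[|//].
move=> /eqP /val_inj /perm_inj eq_ji.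
by rewrite eq_ji ltnn in lt_ij.
Qed.

Lemma dominance_no_inversion (n : nat) (w : 'S_n) (i j : 'I_n) (p q : nat) :
  0 < q -> prod_gt (mvec w i p) (mvec w j q) -> ~~ Defs.inv_pair w i j.
Proof.
move=> q_gt0 [dominated _]; apply/negP => ij_inv.
have := dominated j.
by rewrite mvec_diag mvec_inv_pair // leqn0 => /eqP q0; rewrite q0 in q_gt0.
Qed.

Lemma smaller_after_mono (n : nat) (w : 'S_n) (i j : 'I_n) :
  w i < w j ->
  [set k : 'I_n | (j < k) && (w k < w i)] \subset
  [set l : 'I_n | (j < l) && (w l < w j)].
Proof.
move=> lt_wij; apply/subsetP => k; rewrite !inE => /andP[-> lt_wki] /=.
exact: ltn_trans lt_wki lt_wij.
Qed.

Theorem mainTheorem4 (n : nat) (w : 'S_n) (i j : 'I_n) :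
  i < j -> 0 < code w i -> 0 < code w j ->
  (exists p q : nat,
      [/\ 1 <= p <= code w i, 1 <= q <= code w j &
          prod_gt (mvec w i p) (mvec w j q)]) ->
  [set k : 'I_n | (j < k) && (w k < w i)] \subset
  [set l : 'I_n | (j < l) && (w l < w j)].
Proof.
move=> lt_ij _ _ [p [q [_ /andP[q_gt0 _] dominates]]].
apply: smaller_after_mono; apply: perm_ascent lt_ij _.
exact: dominance_no_inversion q_gt0 dominates.
Qed.
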